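(* For all integers $a,b\ge0$ and all $M\in\mathcal M_2(a,b)$ we have $\psi(M)=-1$ if $a=0$ and $b\ge1$, and $\psi(M)=1$ otherwise.
   Context: $\mathcal M_2(a,b)$ is the set of $M\in\mathrm{GL}_2(\mathbb Z_2)$ such that the kernel of $M-I$ on $(\mathbb Q_2/\mathbb Z_2)^2$ is isomorphic to $\mathbb Z/2^a\mathbb Z\times\mathbb Z/2^{a+b}\mathbb Z$. $\psi$ is the unique non-trivial character $\mathrm{GL}_2(\mathbb Z/2\mathbb Z)\to\{\pm1\}$ (the sign character under an isomorphism with $S_3$), evaluated on $M$ via reduction modulo $2$. *)

From HB Require Import structures.
From mathcomp Require Import all_boot all_order all_algebra all_fingroup.
Set Implicit Arguments. Unset Strict Implicit. Unset Printing Implicit Defensive.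
Import Order.TTheory GRing.Theory Num.Theory.
Local Open Scope ring_scope.

(* A matrix over Z_2 is a compatible family of its reductions modulo 2^(n+1),
   n = 0, 1, 2, ...  (the inverse limit  M_2(Z_2) = lim M_2(Z/2^(n+1)) ). *)
Definition Z2mat := forall n : nat, 'M['Z_(2 ^ n.+1)]_2.

Definition red_step (n : nat) (x : 'Z_(2 ^ n.+2)) : 'Z_(2 ^ n.+1) := (val x)%:R.

Definition Z2mat_coherent (M : Z2mat) : Prop :=
  forall n, map_mx (@red_step n) (M n.+1) = M n.

Definition in_GL2Z2 (M : Z2mat) : Prop :=
  Z2mat_coherent M /\ forall n, M n \in unitmx.

Definition red2 (M : Z2mat) : 'M['Z_2]_2 :=
  map_mx (fun x : 'Z_(2 ^ 1) => ((val x)%:R : 'Z_2)) (M 0%N).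

(* ---------- Q_2/Z_2, realized as dyadic rationals in [0,1) ---------- *)
Definition frac (r : rat) : rat := r - (Num.floor r)%:~R.

Definition dlev (q : rat) : nat := logn 2 `|denq q|%N.

Definition inQ2Z2 (q : rat) : bool :=
  (0 <= q) && (q < 1) && (`|denq q|%N == 2 ^ dlev q)%N.

Definition vQ2Z2 (v : 'cV[rat]_2) : bool := inQ2Z2 (v 0 0) && inQ2Z2 (v 1 0).

Definition addQZ (v w : 'cV[rat]_2) : 'cV[rat]_2 := \col_i frac (v i 0 + w i 0).

(* action of A in M_2(Z_2) on (Q_2/Z_2)^2: for v killed by 2^m, use the
   reduction of A modulo 2^(m+1) (any integer lift works). *)
Definition actZ2 (A : Z2mat) (v : 'cV[rat]_2) : 'cV[rat]_2 :=
  let m := maxn (dlev (v 0 0)) (dlev (v 1 0)) in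
  \col_i frac (\sum_j ((val (A m i j))%:R * v j 0)).

Definition subI (M : Z2mat) : Z2mat := fun n => M n - 1%:M.

Definition kerMI (M : Z2mat) : pred 'cV[rat]_2 :=
  fun v => vQ2Z2 v && (actZ2 (subI M) v == 0).

Lemma ord_pos (m : nat) (i : 'I_m) : (0 < m)%N.
Proof. exact: leq_ltn_trans (leq0n i) (ltn_ord i). Qed.

(* addition in Z/mZ on 'I_m (valid for every m >= 1, including m = 1) *)
Definition cyc_add (m : nat) (i j : 'I_m) : 'I_m :=
  Ordinal (ltn_pmod (i + j) (ord_pos i)).

Definition prod_add (m1 m2 : nat) (x y : 'I_m1 * 'I_m2) : 'I_m1 * 'I_m2 :=
  (cyc_add x.1 y.1, cyc_add x.2 y.2).

Definition isom_cyc2 (K : pred 'cV[rat]_2) (m1 m2 : nat) : Prop :=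
  exists f : 'I_m1 * 'I_m2 -> 'cV[rat]_2,
    [/\ forall x, K (f x),
        injective f,
        forall v, K v -> exists x, f x = v
      & forall x y, f (prod_add x y) = addQZ (f x) (f y)].

Definition inM2 (a b : nat) (M : Z2mat) : Prop :=
  in_GL2Z2 M /\ isom_cyc2 (kerMI M) (2 ^ a) (2 ^ (a + b)).

Definition sign_char (psi : 'M['Z_2]_2 -> int) : Prop :=
  [/\ forall A, A \in unitmx -> (psi A = 1 \/ psi A = -1),
      forall A B, A \in unitmx -> B \in unitmx -> psi (A *m B) = psi A * psi B
    & exists2 A, A \in unitmx & psi A != 1].

(* Let Mbar be the reduction of M modulo 2.  The elements of order at most 2 of
   ker(M - I) on (Q_2/Z_2)^2 are exactly the half-vectors v/2 with v in F_2^2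
   fixed by Mbar, so Mbar has as many fixed vectors as Z/2^a x Z/2^(a+b) has
   elements killed by 2: one if a = b = 0, two if a = 0 < b, four if a > 0.
   In GL_2(F_2), isomorphic to S_3, the elements with exactly two fixed vectors
   are the three transpositions, i.e. the elements on which psi is -1. *)

From Pilot Require Import Defs.
From HB Require Import structures.
From mathcomp Require Import all_boot all_order all_algebra all_fingroup.
From mathcomp Require Import lra.

Set Implicit Arguments.
Unset Strict Implicit.
Unset Printing Implicit Defensive.

Import Order.TTheory GRing.Theory Num.Theory.
Local Open Scope ring_scope.

Lemma Z2_cases (x : 'Z_2) : x = 0 \/ x = 1.
Proof. by case: x => [[|[|//]] ?]; [left|right]; apply: val_inj. Qed.

Lemma ord2_cases (i : 'I_2) : i = 0 \/ i = 1.
Proof. by case: i => [[|[|//]] ?]; [left|right]; apply: val_inj. Qed.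

Definition mx2 (a b c d : 'Z_2) : 'M['Z_2]_2 :=
  \matrix_(i, j) if i == 0 then (if j == 0 then a else b) else (if j == 0 then c else d).

Lemma mx2E (A : 'M['Z_2]_2) : A = mx2 (A 0 0) (A 0 1) (A 1 0) (A 1 1).
Proof.
by apply/matrixP => i j; rewrite mxE; case: (ord2_cases i) => ->; case: (ord2_cases j) => ->.
Qed.

Lemma mul_mx2 a b c d a' b' c' d' :
  mx2 a b c d *m mx2 a' b' c' d' =
  mx2 (a * a' + b * c') (a * b' + b * d') (c * a' + d * c') (c * b' + d * d').
Proof.
apply/matrixP => i j; rewrite !mxE !big_ord_recr big_ord0 !mxE /= add0r.
by case: (ord2_cases i) => ->; case: (ord2_cases j) => ->.
Qed.

Lemma det_mx2 a b c d : \det (mx2 a b c d) = a * d - b * c.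
Proof.
rewrite (expand_det_row _ 0) !big_ord_recr big_ord0 /cofactor !det_mx11 !mxE /=.
by rewrite add0r add0n expr0 expr1 mul1r mulN1r mulrN.
Qed.

Definition id2 := mx2 1 0 0 1.
Definition upp := mx2 1 1 0 1.
Definition low := mx2 1 0 1 1.
Definition swp := mx2 0 1 1 0.
Definition rho := mx2 1 1 1 0.
Definition rho2 := mx2 0 1 1 1.

Lemma mx2_unit_ind (P : 'M['Z_2]_2 -> Prop) :
  P id2 -> P upp -> P low -> P swp -> P rho -> P rho2 ->
  forall A, A \in unitmx -> P A.
Proof.
move=> ? ? ? ? ? ? A; rewrite (mx2E A) unitmxE det_mx2.
move: (A 0 0) (A 0 1) (A 1 0) (A 1 1) => a b c d.
by case: (Z2_cases a) => ->; case: (Z2_cases b) => ->;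
   case: (Z2_cases c) => ->; case: (Z2_cases d) => ->.
Qed.

Lemma upp_sq : upp *m upp = id2. Proof. by rewrite mul_mx2; congr mx2; apply/eqP. Qed.
Lemma rho_sq : rho *m rho = rho2. Proof. by rewrite mul_mx2; congr mx2; apply/eqP. Qed.
Lemma rho2_sq : rho2 *m rho2 = rho. Proof. by rewrite mul_mx2; congr mx2; apply/eqP. Qed.
Lemma upp_low : upp *m low = rho2. Proof. by rewrite mul_mx2; congr mx2; apply/eqP. Qed.
Lemma swp_upp : swp *m upp = rho2. Proof. by rewrite mul_mx2; congr mx2; apply/eqP. Qed.

Definition cv2 (x y : 'Z_2) : 'cV['Z_2]_2 := \col_i if i == 0 then x else y.

Lemma cv2E (v : 'cV['Z_2]_2) : v = cv2 (v 0 0) (v 1 0).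
Proof. by apply/matrixP => i j; rewrite ord1 mxE; case: (ord2_cases i) => ->. Qed.

Lemma eq_cv2 x y x' y' : (cv2 x y == cv2 x' y') = (x == x') && (y == y').
Proof.
apply/eqP/andP => [/matrixP e | [/eqP-> /eqP->] //].
by split; apply/eqP; [have := e 0 0 | have := e 1 0]; rewrite !mxE.
Qed.

Lemma mul_mx2_cv2 a b c d x y :
  mx2 a b c d *m cv2 x y = cv2 (a * x + b * y) (c * x + d * y).
Proof.
apply/matrixP => i j; rewrite !mxE !big_ord_recr big_ord0 !mxE /= add0r.
by case: (ord2_cases i) => ->.
Qed.

Definition fixpts2 (A : 'M['Z_2]_2) : {set 'cV['Z_2]_2} := [set v | A *m v == v].

Lemma card_cV2 (S : {set 'cV['Z_2]_2}) :
  #|S| = count (mem S) [:: cv2 0 0; cv2 0 1; cv2 1 0; cv2 1 1].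
Proof.
rewrite -sum1_card big_mkcond /=.
rewrite (reindex (fun p : 'Z_2 * 'Z_2 => cv2 p.1 p.2)) /=; last first.
  by exists (fun v => (v 0 0, v 1 0)) => [[x y] _ | v _]; rewrite ?mxE -?cv2E.
rewrite -(pair_bigA _ (fun x y : 'Z_2 => if cv2 x y \in S then 1 else 0)%N) /=.
rewrite !big_ord_recl !big_ord0 /=.
have -> : ord0 = 0 :> 'Z_2 by apply: val_inj.
have -> : lift ord0 ord0 = 1 :> 'Z_2 by apply: val_inj.
by rewrite !addn0 !addnA; do 4!case: (_ \in S).
Qed.

Lemma card_fixpts2_mx2 a b c d : #|fixpts2 (mx2 a b c d)| =
  count (fun xy : 'Z_2 * 'Z_2 =>
           (a * xy.1 + b * xy.2 == xy.1) && (c * xy.1 + d * xy.2 == xy.2))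
        [:: (0, 0); (0, 1); (1, 0); (1, 1)].
Proof. by rewrite card_cV2 /= !inE !mul_mx2_cv2 !eq_cv2. Qed.

Lemma card_fixpts2_id2 : #|fixpts2 id2| = 4%N.
Proof. by rewrite card_fixpts2_mx2. Qed.

Lemma card_fixpts2_involutions :
  [/\ #|fixpts2 upp| = 2%N, #|fixpts2 low| = 2%N & #|fixpts2 swp| = 2%N].
Proof. by split; rewrite card_fixpts2_mx2. Qed.

Lemma card_fixpts2_rotations : #|fixpts2 rho| = 1%N /\ #|fixpts2 rho2| = 1%N.
Proof. by split; rewrite card_fixpts2_mx2. Qed.

Lemma sign_char_fixpts2 psi A : sign_char psi -> A \in unitmx ->
  psi A = if #|fixpts2 A| == 2%N then -1 else 1.
Proof.
case=> psi_sign psiM [B unitB psiB] unitA.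
have unit_mx2 a b c d : a * d - b * c = 1 -> mx2 a b c d \in unitmx.
  by move=> det1; rewrite unitmxE det_mx2 det1 unitr1.
have [uupp ulow uswp urho urho2] : [/\ upp \in unitmx, low \in unitmx, swp \in unitmx,
   rho \in unitmx & rho2 \in unitmx] by split; apply: unit_mx2; apply/eqP.
have psi_sq X : X \in unitmx -> psi (X *m X) = 1.
  by move=> uX; rewrite psiM //; case: (psi_sign X uX) => ->.
have psi_eq X Y : X \in unitmx -> Y \in unitmx -> psi (X *m Y) = 1 -> psi Y = psi X.
  by move=> uX uY; rewrite psiM //; case: (psi_sign X uX) => ->; case: (psi_sign Y uY) => ->.
have psiE : forall X, X \in unitmx -> psi X = if #|fixpts2 X| == 2%N then psi upp else 1.
  have [[c_upp c_low c_swp] [c_rho c_rho2]] :=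
    (card_fixpts2_involutions, card_fixpts2_rotations).
  apply: mx2_unit_ind.
  - by rewrite card_fixpts2_id2 -upp_sq (psi_sq _ uupp).
  - by rewrite c_upp.
  - by rewrite c_low (psi_eq _ _ uupp ulow) // upp_low -rho_sq (psi_sq _ urho).
  - by rewrite c_swp -(psi_eq _ _ uswp uupp) // swp_upp -rho_sq (psi_sq _ urho).
  - by rewrite c_rho -rho2_sq (psi_sq _ urho2).
  - by rewrite c_rho2 -rho_sq (psi_sq _ urho).
have psi_upp : psi upp = -1.
  by move: psiB; rewrite psiE //; case: ifP => // _; case: (psi_sign upp uupp) => ->.
by rewrite psiE // psi_upp.
Qed.

Lemma frac_half (n : nat) : Defs.frac (n%:R / 2) = (odd n)%:R / 2.
Proof.
have n_halves : (n%:R : rat) = (odd n)%:R + 2 * (n./2)%:R.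
  by rewrite -{1}(odd_double_half n) natrD -mul2n natrM.
rewrite /Defs.frac; have -> : Num.floor (n%:R / 2 : rat) = (n./2)%:Z.
  apply: floor_def; rewrite n_halves intrD -!pmulrn.
  by apply/andP; split; case: (odd n) => /=; lra.
by rewrite -pmulrn n_halves; case: (odd n) => /=; lra.
Qed.

Lemma natr_Z2 (n : nat) : n%:R = (odd n)%:R :> 'Z_2.
Proof.
rewrite -{1}(odd_double_half n) natrD -muln2 natrM (_ : 2%:R = 0 :> 'Z_2) ?mulr0 ?addr0 //.
exact: val_inj.
Qed.

Lemma frac_double (q : rat) : 0 <= q < 1 ->
  Defs.frac (q + q) = if q + q < 1 then q + q else q + q - 1.
Proof.
case/andP => q_ge0 q_lt1; rewrite /Defs.frac; case: ifP => lt1.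
  by rewrite (@floor_def _ _ 0) ?subr0 //= add0r lt1 andbT; lra.
by rewrite (@floor_def _ _ 1) //=; apply/andP; split; move/negbT: lt1; rewrite -leNgt; lra.
Qed.

Lemma double_frac_eq0 (q : rat) :
  0 <= q < 1 -> Defs.frac (q + q) = 0 -> q = 0 \/ q = 1 / 2.
Proof. by move=> q01; rewrite frac_double //; case: ifP => _ ?; [left|right]; lra. Qed.

Lemma double_frac_id (q : rat) : 0 <= q < 1 -> Defs.frac (q + q) = q -> q = 0.
Proof. by move=> q01; have /andP [? ?] := q01; rewrite frac_double //; case: ifP => _; lra. Qed.

Lemma col2_eq0 (R : nmodType) (v : 'cV[R]_2) : (v == 0) = (v 0 0 == 0) && (v 1 0 == 0).
Proof.
apply/eqP/andP => [->|[/eqP v0 /eqP v1]]; first by rewrite !mxE.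
by apply/matrixP => i j; rewrite ord1 mxE; case: (ord2_cases i) => ->.
Qed.

Definition halfvec (v : 'cV['Z_2]_2) : 'cV[rat]_2 := \col_i ((v i 0 : nat)%:R / 2).

Definition unhalf (w : 'cV[rat]_2) : 'cV['Z_2]_2 := \col_i (w i 0 != 0)%:R.

Lemma halfvecK : cancel halfvec unhalf.
Proof.
move=> v; apply/matrixP => i j; rewrite ord1 !mxE.
by case: (Z2_cases (v i 0)) => ->; apply/eqP; vm_compute.
Qed.

Lemma halfvec0 : halfvec 0 = 0.
Proof. by apply/matrixP => i j; rewrite !mxE mul0r. Qed.

Lemma vQ2Z2_halfvec v : vQ2Z2 (halfvec v).
Proof.
by rewrite /vQ2Z2 !mxE; case: (Z2_cases (v 0 0)) => ->; case: (Z2_cases (v 1 0)) => ->;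
  vm_compute.
Qed.

Lemma dlev_halfvec v : maxn (dlev (halfvec v 0 0)) (dlev (halfvec v 1 0)) = (v != 0).
Proof.
rewrite col2_eq0 !mxE.
by case: (Z2_cases (v 0 0)) => ->; case: (Z2_cases (v 1 0)) => ->; vm_compute.
Qed.

Lemma addQZ_halfvec v : addQZ (halfvec v) (halfvec v) = 0.
Proof.
apply/matrixP => i j; rewrite !mxE -mulrDl -natrD frac_half addnn odd_double.
by rewrite mul0r.
Qed.

Lemma vQ2Z2_entry w i : vQ2Z2 w -> 0 <= w i 0 < 1.
Proof. by case/andP => /andP [? _] /andP [? _]; case: (ord2_cases i) => ->. Qed.

Lemma vQ2Z2_double_eq0 w : vQ2Z2 w -> addQZ w w = 0 -> w = halfvec (unhalf w).
Proof.
move=> wQ /matrixP ww0; apply/matrixP => i j; rewrite ord1 !mxE.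
have := ww0 i 0; rewrite !mxE => /(double_frac_eq0 (vQ2Z2_entry i wQ)).
by case=> ->; apply/eqP; vm_compute.
Qed.

Lemma vQ2Z2_double_id w : vQ2Z2 w -> addQZ w w = w -> w = 0.
Proof.
move=> wQ /matrixP www; apply/matrixP => i j; rewrite ord1 mxE.
by apply: (double_frac_id (vQ2Z2_entry i wQ)); have := www i 0; rewrite !mxE.
Qed.

Definition mod2 (z : 'Z_(2 ^ 2)) : 'Z_2 := (val z)%:R.

Lemma mod2B : {morph mod2 : z w / z - w}.
Proof. by do 2![case=> [[|[|[|[|//]]]] ?]]; apply: val_inj. Qed.

Lemma red2E M i j : Z2mat_coherent M -> red2 M i j = mod2 (M 1%N i j).
Proof.
move=> cohM; rewrite /red2 mxE -(cohM 0%N) mxE /red_step /mod2.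
by apply: val_inj; rewrite /= !Zp_nat /= modn_mod.
Qed.

Lemma map_mod2_subI M : Z2mat_coherent M -> map_mx mod2 (subI M 1%N) = red2 M - 1%:M.
Proof.
move=> cohM; apply/matrixP => i j.
rewrite [LHS]mxE [RHS]mxE red2E // /subI !mxE mod2B; congr (_ - _).
by case: (i == j); apply: val_inj.
Qed.

Lemma frac_half_Z2 (n : nat) : Defs.frac (n%:R / 2) = ((n%:R : 'Z_2) : nat)%:R / 2.
Proof. by rewrite frac_half natr_Z2; case: (odd n); apply/eqP; vm_compute. Qed.

(* A nonzero half-vector has level 1, so [actZ2] reads [S] modulo 4. *)
Lemma actZ2_halfvec (S : Z2mat) v : v != 0 ->
  actZ2 S (halfvec v) = halfvec (map_mx mod2 (S 1%N) *m v).
Proof.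
move=> v_nz; rewrite /actZ2 dlev_halfvec v_nz; apply/matrixP => i j; rewrite ord1 !mxE.
under eq_bigr do rewrite mxE mulrA -natrM.
rewrite -mulr_suml -natr_sum frac_half_Z2 natr_sum.
by under eq_bigr do rewrite natrM natr_Zp; under [in RHS]eq_bigr do rewrite mxE.
Qed.

Lemma actZ2_0 (S : Z2mat) : actZ2 S 0 = 0.
Proof.
apply/matrixP => i j; rewrite !mxE big1 => [|k _]; last by rewrite mxE mulr0.
by rewrite /Defs.frac floor0 subr0.
Qed.

Lemma kerMI_halfvec M : Z2mat_coherent M ->
  forall v, kerMI M (halfvec v) = (v \in fixpts2 (red2 M)).
Proof.
move=> cohM v; rewrite /kerMI vQ2Z2_halfvec inE /=.
have [->|v_nz] := eqVneq v 0; first by rewrite halfvec0 actZ2_0 mulmx0 !eqxx.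
rewrite actZ2_halfvec // -halfvec0 (can_eq halfvecK) (map_mod2_subI cohM).
by rewrite mulmxBl mul1mx subr_eq0.
Qed.

Definition two_torsion (m : nat) : {set 'I_m} := [set u : 'I_m | (m %| u + u)%N].

Lemma dvdn_pow2_lt (k u : nat) :
  (u < 2 ^ k.+1)%N -> (2 ^ k %| u)%N = (u == 0%N) || (u == 2 ^ k)%N.
Proof.
move=> u_lt; apply/idP/orP => [/dvdnP [q def_u] | [] /eqP ->]; rewrite ?dvdn0 ?dvdnn //.
move: u_lt; rewrite def_u expnS ltn_pmul2r ?expn_gt0 //.
by case: q {def_u} => [|[|//]] _; [left | right; rewrite mul1n].
Qed.

Lemma card_two_torsion_pow2 (k : nat) :
  #|two_torsion (2 ^ k)| = (if k == 0%N then 1 else 2)%N.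
Proof.
case: k => [|k].
  by rewrite -[RHS](card_ord 1); apply: eq_card => u; rewrite inE dvd1n.
have [zero half] : (0 < 2 ^ k.+1)%N /\ (2 ^ k < 2 ^ k.+1)%N by rewrite expn_gt0 ltn_exp2l.
rewrite (_ : two_torsion _ = [set Ordinal zero; Ordinal half]) ?cards2.
  by rewrite -val_eqE /= eq_sym -lt0n expn_gt0.
apply/setP => u; rewrite !inE -!val_eqE /=.
move: (nat_of_ord u) (ltn_ord u) => n n_lt.
by rewrite addnn -mul2n expnS dvdn_pmul2l // dvdn_pow2_lt.
Qed.

Lemma prod_add_diag m1 m2 (x z : 'I_m1 * 'I_m2) : val z.1 = 0%N -> val z.2 = 0%N ->
  (prod_add x x == z) = (x \in setX (two_torsion m1) (two_torsion m2)).
Proof.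
by case: z => z1 z2 /= z1_0 z2_0; rewrite !inE /prod_add xpair_eqE -!val_eqE /= z1_0 z2_0.
Qed.

Section TwoTorsion.

Variables (K : pred 'cV[rat]_2) (m1 m2 : nat) (f : 'I_m1 * 'I_m2 -> 'cV[rat]_2).
Hypotheses (K_vQ : forall w, K w -> vQ2Z2 w) (fK : forall x, K (f x)) (f_inj : injective f)
  (f_onto : forall w, K w -> exists x, f x = w)
  (fD : forall x y, f (prod_add x y) = addQZ (f x) (f y)).

Lemma f_double_eq0 x :
  (addQZ (f x) (f x) == 0) = (x \in setX (two_torsion m1) (two_torsion m2)).
Proof.
pose z := (Ordinal (ord_pos x.1), Ordinal (ord_pos x.2)).
have f_z : f z = 0.
  apply: vQ2Z2_double_id (K_vQ (fK z)) _; rewrite -fD; congr f; apply/eqP.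
  by rewrite prod_add_diag // !inE /z /= addn0 !dvdn0.
by rewrite -(@prod_add_diag _ _ x z) // -fD -f_z (inj_eq f_inj).
Qed.

Lemma card_fixed_two_torsion (F : {set 'cV['Z_2]_2}) :
  (forall v, K (halfvec v) = (v \in F)) ->
  #|F| = #|setX (two_torsion m1) (two_torsion m2)|.
Proof.
move=> KF; set T := setX _ _.
have fT x : x \in T -> f x = halfvec (unhalf (f x)).
  by move=> xT; apply: vQ2Z2_double_eq0 (K_vQ (fK x)) _; apply/eqP; rewrite f_double_eq0.
have -> : F = [set unhalf (f x) | x in T].
  apply/setP => v; apply/idP/imsetP => [vF | [x xT ->]]; last by rewrite -KF -fT.
  have [x fx] : exists x, f x = halfvec v by apply: f_onto; rewrite KF.
  by exists x; rewrite ?fx ?halfvecK // -f_double_eq0 fx addQZ_halfvec.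
by rewrite card_in_imset // => x y xT yT fxy; apply: f_inj; rewrite fT // fxy -fT.
Qed.

End TwoTorsion.

Lemma red2_unitmx M : in_GL2Z2 M -> red2 M \in unitmx.
Proof.
case=> _ unitM; suff -> : red2 M = M 0%N :> 'M['Z_2]_2 by exact (unitM 0%N).
by apply/matrixP => i j; rewrite mxE; apply: val_inj; rewrite /= Zp_nat /= modn_small.
Qed.

Theorem lemma6p3 (a b : nat) (M : Z2mat) (psi : 'M['Z_2]_2 -> int) :
  sign_char psi -> inM2 a b M ->
  psi (red2 M) = (if (a == 0)%N && (1 <= b)%N then -1 else 1).
Proof.
move=> psi_sign [GL_M [f [fK f_inj f_onto fD]]].
have K_vQ w : kerMI M w -> vQ2Z2 w by case/andP.
rewrite (sign_char_fixpts2 psi_sign (red2_unitmx GL_M)).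
rewrite (card_fixed_two_torsion K_vQ fK f_inj f_onto fD (kerMI_halfvec GL_M.1)).
by rewrite cardsX !card_two_torsion_pow2; case: (a) (b) => [|?] [|?].
Qed.
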